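(* Suppose problem (P0-group) has a unique solution $v^*\in\mathbb{R}^M$. Suppose further that $x^*:=\nu^{-1}(v^* )\neq 0$ and that $y_i=(x^* )^TQ_ix^*$ for $i=1,\dots,N$. Then the solution set of problem (P0) is exactly $\{x^*,-x^*\}$.
   Context: Real setting. Let $n,N\ge 1$ and $M=n(n+1)/2$. Components of vectors in $\mathbb{R}^M$ are indexed by unordered pairs: for $1\le i,j\le n$ the symmetric index $ij$ ($=ji$) is $\sum_{k=1}^{\min\{i,j\}-1}(n-k+1)+|j-i|+1$. This is a bijection from unordered pairs $\{i,j\}$ (with $i=j$ allowed) onto $\{1,\dots,M\}$. The real Veronese map $\nu:\mathbb{R}^n\to\mathbb{R}^M$ is defined by $(\nu(x))_{ij}=x_ix_j$. For $j=1,\dots,n$, $W_j$ is the $n\times M$ binary matrix with $(W_j)_{k,l}=1$ if $l$ is the index $jk$ and $0$ otherwise. Thus $W_jv=(v_{j1},\dots,v_{jn})^T$, and in particular $W_j\nu(x)=x_jx$. $\|x\|_0$ is the number of nonzero entries of $x$. For vectors $u_1,\dots,u_n$, $\|\{u_j\}_{j=1}^n\|_0$ is the number of indices $j$ with $u_j\neq 0$. Data: vectors $q_1,\dots,q_N\in\mathbb{R}^n$, matrices $Q_i=q_iq_i^T$, and numbers $y_1,\dots,y_N\in\mathbb{R}$. The matrix $A\in\mathbb{R}^{N\times M}$ has entries $A_{i,jj}=q_{ij}^2$ and $A_{i,jk}=2q_{ij}q_{ik}$ for $j<k$, where $q_{ij}$ is the $j$-th entry of $q_i$. With this, $(q_i^Tx)^2=(A\nu(x))_i$.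 Inverse map $\nu^{-1}:\mathbb{R}^M\to\mathbb{R}^n$. Let $i$ be the smallest $j\in\{1,\dots,n\}$ with $v_{jj}>0$; if no such $j$ exists, set $i=0$. If $i>0$ and $v_{ji}^2/v_{ii}=v_{jj}$ for all $j=1,\dots,n$, then $\nu^{-1}(v)=\frac{1}{\sqrt{v_{ii}}}(v_{1i},v_{2i},\dots,v_{ni})^T$. Otherwise $\nu^{-1}(v)=0$. (P0): $\min_{x\in\mathbb{R}^n}\|x\|_0$ subject to $y_i=(q_i^Tx)^2=x^TQ_ix$ for $i=1,\dots,N$. (P0-group): $\min_{v\in\mathbb{R}^M}\|\{W_jv\}_{j=1}^n\|_0$ subject to $Av=y$ and $v_{jj}\ge 0$ for $j=1,\dots,n$. *)

(* The real field R^n is generalised to an arbitrary real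
   closed field R (needed for Num.sqrt in the inverse Veronese map). *)
From HB Require Import structures.
From mathcomp Require Import all_boot all_order all_algebra.
Set Implicit Arguments. Unset Strict Implicit. Unset Printing Implicit Defensive.
Import Order.TTheory GRing.Theory Num.Theory.
Local Open Scope ring_scope.

Definition symdim (n : nat) : nat := (n * n.+1)./2.

(* 0-based version of the paper's symmetric index: for 0-based i j (paper's
   i+1, j+1) the paper's index is
     sum_{k=1}^{min-1} (n-k+1) + |j-i| + 1 ;  we subtract 1. *)
Definition sidx (n i j : nat) : nat :=
  (\sum_(1 <= k < (minn i j).+1) (n - k + 1) + (maxn i j - minn i j))%N.

(* entry of v in R^M at the 0-based position k (0 if out of range) *)
Definition vent (R : nzRingType) (M : nat) (v : 'cV[R]_M) (k : nat) : R :=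
  match @insub _ (fun l => l < M)%N 'I_M k with
  | Some l => v l 0
  | None => 0
  end.

Definition vij (R : nzRingType) (n : nat) (v : 'cV[R]_(symdim n)) (i j : 'I_n) : R :=
  vent v (sidx n i j).

(* real Veronese map: (nu x)_{ij} = x_i x_j, defined entrywise through the
   index bijection (each l corresponds to exactly one pair j <= k). *)
Definition veronese (R : nzRingType) (n : nat) (x : 'cV[R]_n) : 'cV[R]_(symdim n) :=
  \col_(l < symdim n)
     \sum_(j < n) \sum_(k < n | (j <= k)%N && (sidx n j k == l)) x j 0 * x k 0.

Definition Wmx (R : nzRingType) (n : nat) (j : 'I_n) : 'M[R]_(n, symdim n) :=
  \matrix_(k < n, l < symdim n) (if sidx n j k == l then 1 else 0).

Definition l0 (R : nzRingType) (n : nat) (x : 'cV[R]_n) : nat :=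
  #|[set j : 'I_n | x j 0 != 0]|.

Definition l0group (R : nzRingType) (n : nat) (v : 'cV[R]_(symdim n)) : nat :=
  #|[set j : 'I_n | Wmx R j *m v != 0]|.

Definition Qmx (R : nzRingType) (n : nat) (q : 'cV[R]_n) : 'M[R]_n := q *m q^T.

Definition Amx (R : nzRingType) (N n : nat) (q : 'I_N -> 'cV[R]_n)
  : 'M[R]_(N, symdim n) :=
  \matrix_(i < N, l < symdim n)
     \sum_(j < n) \sum_(k < n | (j <= k)%N && (sidx n j k == l))
        (if j == k then q i j 0 ^+ 2 else 2 * q i j 0 * q i k 0).

Definition veronese_inv (R : rcfType) (n : nat) (v : 'cV[R]_(symdim n)) : 'cV[R]_n :=
  match [seq j <- enum 'I_n | 0 < vij v j j] with
  | i :: _ =>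
      if [forall j : 'I_n, vij v j i ^+ 2 / vij v i i == vij v j j]
      then \col_(j < n) ((Num.sqrt (vij v i i))^-1 * vij v j i)
      else 0
  | [::] => 0
  end.

Definition P0_feasible (R : nzRingType) (N n : nat) (q : 'I_N -> 'cV[R]_n)
  (y : 'I_N -> R) (x : 'cV[R]_n) : Prop :=
  forall i : 'I_N, y i = (x^T *m Qmx (q i) *m x) 0 0.

Definition P0_solution (R : nzRingType) (N n : nat) (q : 'I_N -> 'cV[R]_n)
  (y : 'I_N -> R) (x : 'cV[R]_n) : Prop :=
  P0_feasible q y x /\
  forall x' : 'cV[R]_n, P0_feasible q y x' -> (l0 x <= l0 x')%N.

Definition P0g_feasible (R : numDomainType) (N n : nat) (q : 'I_N -> 'cV[R]_n)
  (y : 'I_N -> R) (v : 'cV[R]_(symdim n)) : Prop :=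
  Amx q *m v = \col_(i < N) y i /\ forall j : 'I_n, 0 <= vij v j j.

Definition P0g_solution (R : numDomainType) (N n : nat) (q : 'I_N -> 'cV[R]_n)
  (y : 'I_N -> R) (v : 'cV[R]_(symdim n)) : Prop :=
  P0g_feasible q y v /\
  forall v' : 'cV[R]_(symdim n), P0g_feasible q y v' -> (l0group v <= l0group v')%N.

(* The Veronese map turns each quadratic measurement (q_i^T x)^2 into the
   linear measurement (A nu(x))_i, and the group support of nu(x) is the
   support of x. Hence nu maps (P0)-feasible points to (P0-group)-feasible
   points without changing the sparsity, while nu^{-1} can only decrease it.
   Both x* and every (P0)-solution x therefore lift to (P0-group)-solutions,
   which by uniqueness equal v*; and nu x = nu x* forces x = +-x*. *)
From HB Require Import structures.
From mathcomp Require Import all_boot all_order all_algebra.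
From mathcomp Require Import zify ring.
Import Order.TTheory GRing.Theory Num.Theory.
Set Implicit Arguments. Unset Strict Implicit.

Local Open Scope nat_scope.

(* 0-based position of the diagonal entry v_{mm}, where row m of the upper
   triangle starts. *)
Definition row_start (n m : nat) : nat := \sum_(1 <= k < m.+1) (n - k + 1).

Lemma row_start0 n : row_start n 0 = 0.
Proof. by rewrite /row_start big_geq. Qed.

Lemma row_startS n m : row_start n m.+1 = row_start n m + (n - m.+1 + 1).
Proof. by rewrite /row_start big_nat_recr. Qed.

Lemma leq_row_start n a c : a <= c -> row_start n a <= row_start n c.
Proof.
elim: c => [|c IH]; first by rewrite leqn0 => /eqP ->.
rewrite leq_eqVlt => /orP[/eqP-> //|]; rewrite ltnS => /IH.
rewrite row_startS; lia.
Qed.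

Lemma row_start_ltn n a c : a < c -> a < n -> row_start n a + (n - a) <= row_start n c.
Proof. by move=> ac an; have := leq_row_start n ac; rewrite row_startS; lia. Qed.

Lemma row_start_double n m : m <= n -> (row_start n m).*2 + m * m = m * n.*2.+1.
Proof.
elim: m => [|m IH] mn; first by rewrite row_start0.
by rewrite row_startS; have := IH (ltnW mn); nia.
Qed.

Lemma row_start_symdim n : row_start n n = symdim n.
Proof.
rewrite /symdim; have := row_start_double (leqnn n) => double.
have -> : n * n.+1 = (row_start n n).*2 by nia.
by rewrite doubleK.
Qed.

Lemma sidxE n i j : sidx n i j = row_start n (minn i j) + (maxn i j - minn i j).
Proof. by []. Qed.

Lemma sidxC n i j : sidx n i j = sidx n j i.
Proof. by rewrite /sidx minnC maxnC. Qed.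

Lemma sidx_lt n i j : i < n -> j < n -> sidx n i j < symdim n.
Proof.
move=> i_lt j_lt; rewrite sidxE -row_start_symdim.
have /(leq_row_start n) : (minn i j).+1 <= n by lia.
rewrite row_startS; lia.
Qed.

Lemma sidx_inj n a b c d : a <= b -> b < n -> c <= d -> d < n ->
  sidx n a b = sidx n c d -> a = c /\ b = d.
Proof.
move=> ab bn cd dn; rewrite !sidxE.
have -> : minn a b = a by lia. have -> : maxn a b = b by lia.
have -> : minn c d = c by lia. have -> : maxn c d = d by lia.
move=> e; suff ac : a = c by subst c; split; lia.
case: (ltngtP a c) => // [ac|ca].
- by have := row_start_ltn (n:=n) ac (leq_ltn_trans ab bn); lia.
- by have := row_start_ltn (n:=n) ca (leq_ltn_trans cd dn); lia.
Qed.

Local Open Scope ring_scope.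

Lemma sum_eq_vent (R : nzRingType) M (v : 'cV[R]_M) (k : nat) :
  \sum_(l < M | k == l) v l 0 = vent v k.
Proof.
rewrite /vent; case: insubP => [l _ vl|k_ge].
  by rewrite (big_pred1 l) // => l' /=; rewrite -vl -(inj_eq val_inj) eq_sym.
by rewrite big_pred0 // => l; apply/eqP => kl; rewrite kl ltn_ord in k_ge.
Qed.

Lemma Wmx_mulE (R : nzRingType) n (j k : 'I_n) (v : 'cV[R]_(symdim n)) :
  (Wmx R j *m v) k 0 = vij v j k.
Proof.
rewrite mxE; under eq_bigr => l _ do rewrite mxE (fun_if (fun c => c * v l 0)) mul1r mul0r.
by rewrite -big_mkcond sum_eq_vent.
Qed.

Lemma sum_sidx_pair (V : nmodType) n (F : 'I_n -> 'I_n -> V) (a b : 'I_n) :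
  (a <= b)%N ->
  \sum_(j < n) \sum_(k < n | (j <= k)%N && (sidx n j k == sidx n a b)) F j k = F a b.
Proof.
move=> ab; rewrite (bigD1 a) //= [X in _ + X]big1 ?addr0; last first.
  move=> j ja; apply: big1 => k /andP[jk /eqP e].
  have [ja' _] := sidx_inj jk (ltn_ord k) ab (ltn_ord b) e.
  by rewrite -(inj_eq val_inj) /= ja' eqxx in ja.
rewrite (bigD1 b) ?ab ?eqxx //= [X in _ + X]big1 ?addr0 // => k /andP[/andP[ak /eqP e] kb].
have [_ kb'] := sidx_inj ak (ltn_ord k) ab (ltn_ord b) e.
by rewrite -(inj_eq val_inj) /= kb' eqxx in kb.
Qed.

Lemma vij_veronese (R : comNzRingType) n (x : 'cV[R]_n) (a b : 'I_n) :
  vij (veronese x) a b = x a 0 * x b 0.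
Proof.
wlog ab : a b / (a <= b)%N.
  move=> H; case: (leqP a b) => [|ba]; first exact: H.
  by rewrite /vij sidxC mulrC -(H b a (ltnW ba)).
rewrite /vij /vent; case: insubP => [l _ vl|]; last by rewrite sidx_lt.
by rewrite mxE vl sum_sidx_pair.
Qed.

Lemma veronese_inj_opp (R : idomainType) n (x z : 'cV[R]_n) :
  veronese x = veronese z -> x = z \/ x = - z.
Proof.
move=> exz; have xz a b : x a 0 * x b 0 = z a 0 * z b 0.
  by rewrite -!vij_veronese exz.
have [/existsP[a za]|/existsPn z0] := boolP [exists a, z a 0 != 0]; last first.
  left; apply/matrixP => b c; rewrite (ord1 c).
  have /negPn/eqP zb := z0 b.
  by apply/eqP; rewrite zb -sqrf_eq0 expr2 xz zb mul0r.
have : x a 0 ^+ 2 == z a 0 ^+ 2 by rewrite !expr2 xz.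
rewrite eqf_sqr => /orP[/eqP e|/eqP e]; [left|right];
  apply/matrixP => b c; rewrite (ord1 c) ?mxE; apply: (mulfI za).
- by rewrite -{1}e xz.
- by rewrite mulrN -{1}(opprK (z a 0)) -e mulNr xz.
Qed.

Definition Acoef (R : nzRingType) n (qi : 'cV[R]_n) (j k : 'I_n) : R :=
  if j == k then qi j 0 ^+ 2 else 2 * qi j 0 * qi k 0.

Lemma Amx_mulE (R : comNzRingType) N n (q : 'I_N -> 'cV[R]_n)
    (v : 'cV[R]_(symdim n)) i :
  (Amx q *m v) i 0 = \sum_(j < n) \sum_(k < n | (j <= k)%N) Acoef (q i) j k * vij v j k.
Proof.
rewrite mxE.
have Av l : Amx q i l * v l 0 = \sum_(j < n) \sum_(k < n)
    (if (j <= k)%N && (sidx n j k == l) then Acoef (q i) j k * v l 0 else 0).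
  rewrite mxE mulr_suml; apply: eq_bigr => j _.
  by rewrite mulr_suml big_mkcond; apply: eq_bigr => k _; case: ifP.
rewrite (eq_bigr _ (fun l _ => Av l)) exchange_big /=; apply: eq_bigr => j _.
rewrite exchange_big /= [RHS]big_mkcond /=; apply: eq_bigr => k _.
case: (leqP j k) => /= [_|_]; last by apply: big1.
by rewrite /vij -sum_eq_vent big_distrr /= [RHS]big_mkcond.
Qed.

Lemma sum_sym_upper (R : comNzRingType) n (F : 'I_n -> 'I_n -> R) :
  (forall j k, F j k = F k j) ->
  \sum_(j < n) \sum_(k < n) F j k =
  \sum_(j < n) \sum_(k < n | (j <= k)%N) (if j == k then F j j else 2 * F j k).
Proof.
move=> Fsym.
have lt_neq (j k : 'I_n) : (j <= k)%N && (k != j) = (j < k)%N.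
  by rewrite ltn_neqAle -(inj_eq val_inj) /= eq_sym andbC.
have split_row (j : 'I_n) : \sum_(k < n) F j k =
    F j j + \sum_(k < n | (j < k)%N) F j k + \sum_(k < n | (k < j)%N) F j k.
  rewrite (bigID (fun k : 'I_n => (j <= k)%N)) /=; congr (_ + _).
    by rewrite (bigD1 j) ?leqnn //=; congr (_ + _); apply: eq_bigl => k; rewrite lt_neq.
  by apply: eq_bigl => k; rewrite -ltnNge.
have upper_row (j : 'I_n) :
    \sum_(k < n | (j <= k)%N) (if j == k then F j j else 2 * F j k) =
    F j j + 2 * \sum_(k < n | (j < k)%N) F j k.
  rewrite (bigD1 j) ?leqnn //= eqxx mulr_sumr; congr (_ + _).
  apply: eq_big => [k|k /andP[_ /negbTE]]; first by rewrite lt_neq.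
  by rewrite eq_sym => ->.
have lower_upper : \sum_(j < n) \sum_(k < n | (k < j)%N) F j k =
                   \sum_(j < n) \sum_(k < n | (j < k)%N) F j k.
  under eq_bigr => j _ do rewrite big_mkcond.
  rewrite exchange_big /=; apply: eq_bigr => k _.
  by rewrite [RHS]big_mkcond; apply: eq_bigr => j _; rewrite Fsym.
rewrite (eq_bigr _ (fun j _ => split_row j)) (eq_bigr _ (fun j _ => upper_row j)).
rewrite !big_split /= -addrA lower_upper -big_split /=; congr (_ + _).
by apply: eq_bigr => j _; rewrite mulr2n mulrDl mul1r.
Qed.

Lemma quad_QmxE (R : comNzRingType) n (qi x : 'cV[R]_n) :
  (x^T *m Qmx qi *m x) 0 0 = \sum_(j < n) \sum_(k < n) (qi j 0 * x j 0) * (qi k 0 * x k 0).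
Proof.
rewrite /Qmx mulmxA -mulmxA mxE big_ord1 !mxE mulr_suml; apply: eq_bigr => j _.
by rewrite mxE mulr_sumr; apply: eq_bigr => k _; rewrite !mxE; ring.
Qed.

Lemma P0_feasibleN (R : comNzRingType) N n (q : 'I_N -> 'cV[R]_n) y x :
  P0_feasible q y x -> P0_feasible q y (- x).
Proof.
move=> fx i; rewrite fx; have -> : (- x)^T = - x^T by apply/matrixP => a b; rewrite !mxE.
by rewrite !(mulNmx, mulmxN) opprK.
Qed.

Lemma l0N (R : nzRingType) n (x : 'cV[R]_n) : l0 (- x) = l0 x.
Proof. by apply: eq_card => j; rewrite !inE mxE oppr_eq0. Qed.

Lemma l0_0 (R : nzRingType) n : l0 (0 : 'cV[R]_n) = 0%N.
Proof. by apply/eqP; rewrite cards_eq0; apply/eqP/setP => j; rewrite !inE mxE eqxx. Qed.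

Lemma l0group_veronese (R : idomainType) n (x : 'cV[R]_n) :
  l0group (veronese x) = l0 x.
Proof.
apply: eq_card => j; rewrite !inE; congr negb; apply/eqP/eqP => [|xj].
- move/matrixP/(_ j 0); rewrite Wmx_mulE vij_veronese mxE => /eqP.
  by rewrite mulf_eq0 orbb => /eqP.
- by apply/matrixP => k c; rewrite (ord1 c) Wmx_mulE vij_veronese xj mul0r mxE.
Qed.

Lemma l0_veronese_inv (R : rcfType) n (v : 'cV[R]_(symdim n)) :
  (l0 (veronese_inv v) <= l0group v)%N.
Proof.
rewrite /veronese_inv; case: [seq _ <- _ | _] => [|i _]; first by rewrite l0_0.
case: ifP => _; last by rewrite l0_0.
apply/subset_leq_card/subsetP => j; rewrite !inE mxE mulf_eq0 negb_or => /andP[_ vji].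
apply: contra vji => /eqP/matrixP/(_ i 0).
by rewrite Wmx_mulE mxE => ->.
Qed.

Section Lifting.

Variables (R : realDomainType) (N n : nat) (q : 'I_N -> 'cV[R]_n) (y : 'I_N -> R).

Lemma P0g_feasible_veronese x : P0_feasible q y x -> P0g_feasible q y (veronese x).
Proof.
move=> fx; split; last by move=> j; rewrite vij_veronese -expr2 sqr_ge0.
apply/matrixP => i c; rewrite (ord1 c) [RHS]mxE fx Amx_mulE quad_QmxE.
rewrite (@sum_sym_upper _ _ (fun j k => (q i j 0 * x j 0) * (q i k 0 * x k 0)));
  last by move=> *; ring.
apply: eq_bigr => j _; apply: eq_bigr => k _.
by rewrite vij_veronese /Acoef; case: eqP => [->|_]; ring.
Qed.

Lemma P0g_solution_leq_l0 v x :
  P0g_solution q y v -> P0_feasible q y x -> (l0group v <= l0 x)%N.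
Proof. by move=> [_ opt] /P0g_feasible_veronese/opt; rewrite l0group_veronese. Qed.

Lemma P0g_solution_veronese v x : P0g_solution q y v -> P0_feasible q y x ->
  (l0 x <= l0group v)%N -> P0g_solution q y (veronese x).
Proof.
move=> [fv opt] fx lx; split; first exact: P0g_feasible_veronese.
by move=> v' /opt; rewrite l0group_veronese; apply: leq_trans.
Qed.

End Lifting.

Unset Implicit Arguments. Set Strict Implicit.

Theorem theorem1 (R : rcfType) (n N : nat) (hn : (1 <= n)%N) (hN : (1 <= N)%N)
  (q : 'I_N -> 'cV[R]_n) (y : 'I_N -> R) (vstar : 'cV[R]_(symdim n)) :
  P0g_solution q y vstar ->
  (forall v : 'cV[R]_(symdim n), P0g_solution q y v -> v = vstar) ->
  veronese_inv vstar != 0 ->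
  (forall i : 'I_N,
     y i = ((veronese_inv vstar)^T *m Qmx (q i) *m veronese_inv vstar) 0 0) ->
  forall x : 'cV[R]_n,
    P0_solution q y x <-> (x = veronese_inv vstar \/ x = - veronese_inv vstar).
Proof.
move=> sol uniq _ fxs x; set xs := veronese_inv vstar in fxs *.
have lxs : (l0 xs <= l0group vstar)%N := l0_veronese_inv vstar.
have nxs : veronese xs = vstar := uniq _ (P0g_solution_veronese sol fxs lxs).
have xs_min x' : P0_feasible q y x' -> (l0 xs <= l0 x')%N.
  by move=> fx'; apply: leq_trans lxs (P0g_solution_leq_l0 sol fx').
split=> [[fx x_min]|[->|->]].
- have lx := leq_trans (x_min _ fxs) lxs.
  have nx : veronese x = vstar := uniq _ (P0g_solution_veronese sol fx lx).
  by apply: veronese_inj_opp; rewrite nx nxs.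
- by split.
- by split=> [|x' /xs_min]; [apply: P0_feasibleN | rewrite l0N].
Qed.
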